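(* In the curved-exam game described in the context, let $x^*=(x_1^*,\dots,x_n^* )$ be a pure Nash equilibrium in which there is a curve ($\bar x^*:=\frac1n\sum_j x_j^*<m$) and every student exerts positive effort ($x_i^*>0$ for all $i$). Define $$\hat\alpha_n:=n\Big(1-\Big(\sum_{i=1}^n\frac{1}{n-\alpha_i}\Big)^{-1}\Big)=n-\mathrm{HarmonicMean}(n-\alpha_1,\dots,n-\alpha_n).$$ Then $\min_i\alpha_i\le\hat\alpha_n\le\max_i\alpha_i$, $$\bar x^*=1-\frac{nm}{n-1}\Big(\frac1{\hat\alpha_n}-1\Big),\qquad\text{and}\qquad x_i^*=\frac{(n-1)\alpha_i-n(1-\alpha_i)(m-\bar x^* )}{n-\alpha_i}\ \text{ for each } i.$$
   Context: The curved-exam game: fix $n\ge2$, abilities $\alpha_1,\dots,\alpha_n\in(0,1)$, target mean $m\in(0,1)$. Student $i$ chooses $x_i\in[0,1]$; $\bar x=\frac1n\sum_j x_j$, $\bar x_{-i}=\frac1{n-1}\sum_{j\ne i}x_j$. Grade $G_i(x)=x_i+\max(m-\bar x,0)=\max\big(m+\frac{n-1}{n}(x_i-\bar x_{-i}),x_i\big)$ (not truncated at 1); payoff $U_i(x)=G_i(x)^{\alpha_i}(1-x_i)^{1-\alpha_i}$. A pure Nash equilibrium is a profile where each $x_i$ maximizes $U_i(\cdot,x_{-i})$ over $[0,1]$. *)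

From HB Require Import structures.
From mathcomp Require Import all_boot all_order all_algebra.
From mathcomp Require Import all_classical all_reals all_analysis.
Set Implicit Arguments. Unset Strict Implicit. Unset Printing Implicit Defensive.
Import Order.TTheory GRing.Theory Num.Theory.
Local Open Scope ring_scope.

Section CurvedExam.
Variables (R : realType) (n : nat).

Definition xbar (x : 'I_n -> R) : R := (\sum_(j < n) x j) / n%:R.

(* grade  G_i(x) = x_i + max(m - xbar, 0)  (not truncated at 1) *)
Definition grade (m : R) (x : 'I_n -> R) (i : 'I_n) : R :=
  x i + Num.max (m - xbar x) 0.

(* payoff  U_i(x) = G_i(x)^alpha_i * (1 - x_i)^(1 - alpha_i)  (powR: 0 `^ a = 0 for a <> 0) *)
Definition payoff (alpha : 'I_n -> R) (m : R) (x : 'I_n -> R) (i : 'I_n) : R :=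
  (grade m x i) `^ (alpha i) * (1 - x i) `^ (1 - alpha i).

Definition deviate (x : 'I_n -> R) (i : 'I_n) (y : R) : 'I_n -> R :=
  fun j => if j == i then y else x j.

Definition pure_nash (alpha : 'I_n -> R) (m : R) (x : 'I_n -> R) : Prop :=
  forall i : 'I_n, 0 <= x i <= 1 /\
    forall y : R, 0 <= y <= 1 -> payoff alpha m (deviate x i y) i <= payoff alpha m x i.

Definition alpha_hat (alpha : 'I_n -> R) : R :=
  n%:R * (1 - (\sum_(i < n) (n%:R - alpha i)^-1)^-1).

End CurvedExam.

From HB Require Import structures.
From mathcomp Require Import all_boot all_order all_algebra.
From mathcomp Require Import all_classical all_reals all_analysis.
From mathcomp Require Import ring lra.
Set Implicit Arguments. Unset Strict Implicit. Unset Printing Implicit Defensive.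
Import Order.TTheory GRing.Theory Num.Theory.
Local Open Scope ring_scope.

(** Under a curve, changing x_i by a small amount changes student i's grade
  affinely, with slope (n-1)/n, so near an equilibrium effort 0 < x_i < 1 the
  payoff is a Cobb-Douglas function of x_i (x_i = 1 is excluded because it
  yields payoff 0, beaten by x_i = 0).  Its logarithm is differentiable and the
  first-order condition expresses x_i linearly in the gap m - xbar.  Averaging
  these n equations gives a linear equation for xbar whose coefficient is
  \sum_i 1/(n - alpha_i), which is how alpha_hat enters; the bounds on
  alpha_hat say that the harmonic mean of the n - alpha_i lies between their
  minimum and maximum. *)

Section CobbDouglas.
Variable R : realType.

Lemma is_derive_affine (a c t : R) : is_derive t 1 (fun y => a * y + c) a.
Proof. by apply: is_derive_eq; rewrite addr0 /GRing.scale /= mulr1. Qed.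

Lemma is_derive_one_minus (t : R) : is_derive t 1 (fun y => 1 - y) (-1).
Proof. by apply: is_derive_eq; rewrite add0r mul1r. Qed.

Lemma is_derive_ln_comp (g : R -> R) (t dg : R) :
  0 < g t -> is_derive t 1 g dg -> is_derive t 1 (fun y => ln (g y)) (dg / g t).
Proof.
move=> g_gt0 g_dg; rewrite mulrC.
exact (@is_derive1_comp _ (@ln R) g t _ _ (is_derive1_ln g_gt0) g_dg).
Qed.

Lemma powR_expR_ln (b e : R) : 0 < b -> b `^ e = expR (e * ln b).
Proof. by move=> b_gt0; rewrite /powR gt_eqF. Qed.

Lemma cobb_douglas_foc (al a c lo hi x : R) :
  lo < x < hi ->
  (forall t, lo < t < hi -> 0 < a * t + c /\ t < 1) ->
  (forall t, lo < t < hi ->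
     (a * t + c) `^ al * (1 - t) `^ (1 - al) <= (a * x + c) `^ al * (1 - x) `^ (1 - al)) ->
  al * a * (1 - x) = (1 - al) * (a * x + c).
Proof.
move=> x_in dom x_max.
pose f t := al * ln (a * t + c) + (1 - al) * ln (1 - t).
have f_deriv t : lo < t < hi ->
    is_derive t 1 f (al * (a / (a * t + c)) + (1 - al) * (-1 / (1 - t))).
  move=> /dom [aff_gt0 t_lt1].
  have := @is_derive_ln_comp (fun y => a * y + c) t a aff_gt0 (is_derive_affine _ _ _).
  have := @is_derive_ln_comp (fun y => 1 - y) t (-1) _ (is_derive_one_minus t).
  rewrite subr_gt0 => /(_ t_lt1) ln_dg ln_aff.
  by rewrite /f; apply: is_derive_eq.
have prod_expR t : lo < t < hi ->
    (a * t + c) `^ al * (1 - t) `^ (1 - al) = expR (f t).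
  move=> /dom [aff_gt0 t_lt1].
  by rewrite powR_expR_ln // powR_expR_ln ?subr_gt0 // -expRD.
have /andP[lo_x x_hi] := x_in.
have df0 : is_derive x 1 f 0.
  apply: (@derive1_at_max _ f lo hi x (ltW (lt_trans lo_x x_hi))).
  - by move=> t; rewrite in_itv /= => /f_deriv [].
  - by rewrite in_itv /= x_in.
  - move=> t; rewrite in_itv /= => t_in.
    by rewrite -ler_expR -prod_expR // -prod_expR //; exact: x_max.
have [aff_gt0 x_lt1] := dom x x_in.
have [_ df_x] := f_deriv x x_in; have [_ df0_x] := df0.
have one_minus_x_gt0 : 0 < 1 - x by rewrite subr_gt0.
move/esym: df_x; rewrite df0_x.
have -> : al * (a / (a * x + c)) + (1 - al) * (-1 / (1 - x))
        = (al * a * (1 - x) - (1 - al) * (a * x + c)) / ((a * x + c) * (1 - x)).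
  by field; rewrite !gt_eqF.
have denom_neq0 : (a * x + c) * (1 - x) != 0 by rewrite mulf_neq0 // gt_eqF.
by move/eqP; rewrite mulf_eq0 invr_eq0 (negbTE denom_neq0) orbF subr_eq0 => /eqP.
Qed.

End CobbDouglas.

Section Deviation.
Variables (R : realType) (n : nat) (x : 'I_n -> R) (i : 'I_n).

Lemma deviate_id : deviate x i (x i) = x.
Proof. by apply/funext => j; rewrite /deviate; case: eqP => // ->. Qed.

Lemma deviate_at (y : R) : deviate x i y i = y.
Proof. by rewrite /deviate eqxx. Qed.

Lemma sum_deviate (y : R) :
  \sum_(j < n) deviate x i y j = \sum_(j < n) x j - x i + y.
Proof.
rewrite (bigD1 i) //= [in RHS](bigD1 i) //= deviate_at.
rewrite (eq_bigr x) => [|j /negbTE j_neq_i]; last by rewrite /deviate j_neq_i.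
by rewrite [x i + _]addrC addrK addrC.
Qed.

Hypothesis n_gt0 : (0 < n)%N.

Lemma xbar_deviate (y : R) : xbar (deviate x i y) = xbar x + (y - x i) / n%:R.
Proof.
have n_neq0 : n%:R != 0 :> R by rewrite pnatr_eq0 -lt0n.
by rewrite /xbar sum_deviate; field.
Qed.

Lemma payoff_deviate_curved (alpha : 'I_n -> R) (m y : R) :
  xbar (deviate x i y) <= m ->
  payoff alpha m (deviate x i y) i =
  ((n%:R - 1) / n%:R * y + (m - xbar x + x i / n%:R)) `^ alpha i
    * (1 - y) `^ (1 - alpha i).
Proof.
move=> curved; have n_neq0 : n%:R != 0 :> R by rewrite pnatr_eq0 -lt0n.
rewrite /payoff /grade deviate_at (max_idPl _); last by rewrite subr_ge0.
by congr (_ `^ _ * _); rewrite xbar_deviate; field.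
Qed.

End Deviation.

Section CurvedEquilibrium.
Variables (R : realType) (n : nat) (alpha : 'I_n -> R) (m : R) (x : 'I_n -> R).
Hypotheses (n_gt0 : (0 < n)%N) (alpha01 : forall i, 0 < alpha i < 1).
Hypotheses (nash : pure_nash alpha m x) (curve : xbar x < m).

Let n_pos : 0 < n%:R :> R. Proof. by rewrite ltr0n. Qed.

Let nash_deviate_le (i : 'I_n) (y : R) : 0 <= y <= 1 ->
  payoff alpha m (deviate x i y) i <= payoff alpha m (deviate x i (x i)) i.
Proof. by rewrite deviate_id; apply: (nash i).2. Qed.

Lemma nash_effort_lt1 (i : 'I_n) : x i < 1.
Proof.
have [/andP[_ xi_le1] _] := nash i; have [alpha_gt0 alpha_lt1] := andP (alpha01 i).
rewrite lt_neqAle xi_le1 andbT; apply/eqP => xi1.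
have inv_n_gt0 : 0 < 1 / n%:R :> R by rewrite divr_gt0.
have curved0 : xbar (deviate x i 0) <= m.
  by rewrite xbar_deviate // xi1 sub0r mulNr lerBlDr ler_wpDr ?ltW.
have curved_xi : xbar (deviate x i (x i)) <= m by rewrite deviate_id ltW.
have := @nash_deviate_le i 0; rewrite lexx ler01 => /(_ isT).
rewrite !payoff_deviate_curved // xi1 subrr powR0 ?subr_eq0 1?eq_sym ?lt_eqF //.
rewrite !mulr0 add0r subr0 powR1 mulr1 leNgt => /negP; apply.
by apply: powR_gt0; rewrite addr_gt0 ?subr_gt0.
Qed.

Lemma nash_foc (i : 'I_n) : 0 < x i ->
  alpha i * ((n%:R - 1) / n%:R) * (1 - x i)
  = (1 - alpha i) * ((n%:R - 1) / n%:R * x i + (m - xbar x + x i / n%:R)).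
Proof.
move=> xi_gt0.
have slope_ge0 : 0 <= (n%:R - 1) / n%:R :> R.
  by rewrite divr_ge0 ?subr_ge0 ?ler1n // ltW.
have gap_gt0 : 0 < m - xbar x by rewrite subr_gt0.
have intercept_gt0 : 0 < m - xbar x + x i / n%:R by rewrite addr_gt0 ?divr_gt0.
(* On ]0, hi[ a deviation keeps the class under the curve and below effort 1. *)
pose hi := Num.min 1 (x i + n%:R * (m - xbar x)).
have [hi_le1 hi_le_curve] : hi <= 1 /\ hi <= x i + n%:R * (m - xbar x).
  by split; rewrite ge_min lexx ?orbT.
apply: (@cobb_douglas_foc _ _ _ _ 0 hi).
- by rewrite xi_gt0 lt_min nash_effort_lt1 ltrDl mulr_gt0.
- move=> t /andP[t_gt0 t_lt_hi]; split; last exact: lt_le_trans hi_le1.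
  by rewrite ltr_wpDl // mulr_ge0 // ltW.
move=> t /andP[t_gt0 t_lt_hi].
have t01 : 0 <= t <= 1 by rewrite (ltW t_gt0) (ltW (lt_le_trans t_lt_hi hi_le1)).
have curved_t : xbar (deviate x i t) <= m.
  rewrite xbar_deviate // -lerBrDl ler_pdivrMr // mulrC lerBlDl.
  exact: ltW (lt_le_trans t_lt_hi hi_le_curve).
have curved_xi : xbar (deviate x i (x i)) <= m by rewrite deviate_id ltW.
by have := @nash_deviate_le i t t01; rewrite !payoff_deviate_curved.
Qed.

Lemma nash_effort (i : 'I_n) : 0 < x i ->
  x i = ((n%:R - 1) * alpha i - n%:R * (1 - alpha i) * (m - xbar x)) / (n%:R - alpha i).
Proof.
move=> /nash_foc foc; have [_ alpha_lt1] := andP (alpha01 i).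
have n_neq0 : n%:R != 0 :> R by rewrite gt_eqF.
have n_sub_alpha_neq0 : n%:R - alpha i != 0.
  by rewrite gt_eqF // subr_gt0 (lt_le_trans alpha_lt1) // ler1n n_gt0.
have : n%:R * (alpha i * ((n%:R - 1) / n%:R) * (1 - x i)
        - (1 - alpha i) * ((n%:R - 1) / n%:R * x i + (m - xbar x + x i / n%:R)))
      = (n%:R - 1) * alpha i - n%:R * (1 - alpha i) * (m - xbar x) - x i * (n%:R - alpha i).
  by field.
rewrite foc subrr mulr0 => /esym/eqP; rewrite subr_eq0 => /eqP ->.
by rewrite mulfK.
Qed.

End CurvedEquilibrium.

Section MeanBounds.
Variables (R : realDomainType) (I : finType) (F : I -> R) (i0 : I).

Lemma exists_mul_le_sum : exists i, #|I|%:R * F i <= \sum_j F j.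
Proof.
exists [arg min_(i < i0) F i]%O; case: arg_minP => // i _ F_min.
by rewrite mulr_natl -sumr_const; apply: ler_sum => j _; exact: F_min.
Qed.

Lemma exists_sum_le_mul : exists i, \sum_j F j <= #|I|%:R * F i.
Proof.
exists [arg max_(i > i0) F i]%O; case: arg_maxP => // i _ F_max.
by rewrite mulr_natl -sumr_const; apply: ler_sum => j _; exact: F_max.
Qed.

End MeanBounds.

Section AlphaHat.
Variables (R : realType) (n : nat) (alpha : 'I_n -> R).
Hypotheses (n_gt1 : (1 < n)%N) (alpha01 : forall i, 0 < alpha i < 1).

Local Notation inv_sum := (\sum_(i < n) (n%:R - alpha i)^-1).

Let n_pos : 0 < n%:R :> R.
Proof. by rewrite ltr0n ltnW. Qed.

Let n_sub_alpha_gt0 (i : 'I_n) : 0 < n%:R - alpha i.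
Proof.
have [_ alpha_lt1] := andP (alpha01 i).
by rewrite subr_gt0 (lt_le_trans alpha_lt1) // ler1n ltnW.
Qed.

Lemma inv_sum_gt1 : 1 < inv_sum.
Proof.
have inv_n_lt i : n%:R^-1 < (n%:R - alpha i)^-1.
  have [alpha_gt0 _] := andP (alpha01 i).
  by rewrite ltf_pV2 ?posrE ?n_pos ?n_sub_alpha_gt0 // ltrBlDr ltrDl.
have nonempty : has predT (index_enum 'I_n).
  by apply/hasP; exists (Ordinal (ltnW n_gt1)); rewrite ?mem_index_enum.
have := ltr_sum nonempty (fun i _ => inv_n_lt i).
by rewrite sumr_const card_ord -[n%:R^-1 *+ n]mulr_natr mulVf // gt_eqF ?n_pos.
Qed.

Let inv_sum_gt0 : 0 < inv_sum.
Proof. exact: lt_trans ltr01 inv_sum_gt1. Qed.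

Lemma ler_alpha_hat (i : 'I_n) :
  (alpha i <= alpha_hat alpha) = (n%:R * (n%:R - alpha i)^-1 <= inv_sum).
Proof.
rewrite /alpha_hat mulrBr mulr1 lerBrDl -lerBrDr.
by rewrite !ler_pdivrMr ?inv_sum_gt0 ?n_sub_alpha_gt0 // mulrC.
Qed.

Lemma ger_alpha_hat (i : 'I_n) :
  (alpha_hat alpha <= alpha i) = (inv_sum <= n%:R * (n%:R - alpha i)^-1).
Proof.
rewrite /alpha_hat mulrBr mulr1 lerBlDl -lerBlDr.
by rewrite !ler_pdivlMr ?inv_sum_gt0 ?n_sub_alpha_gt0 // mulrC.
Qed.

Lemma alpha_hat_ge_min : exists i, alpha i <= alpha_hat alpha.
Proof.
have [i le_mean] := exists_mul_le_sum (fun i => (n%:R - alpha i)^-1) (Ordinal (ltnW n_gt1)).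
by exists i; rewrite ler_alpha_hat -[n in n%:R * _](card_ord n).
Qed.

Lemma alpha_hat_le_max : exists i, alpha_hat alpha <= alpha i.
Proof.
have [i ge_mean] := exists_sum_le_mul (fun i => (n%:R - alpha i)^-1) (Ordinal (ltnW n_gt1)).
by exists i; rewrite ger_alpha_hat -[n in n%:R * _](card_ord n).
Qed.

Lemma xbar_of_efforts (m : R) (x : 'I_n -> R) :
  (forall i, x i = ((n%:R - 1) * alpha i - n%:R * (1 - alpha i) * (m - xbar x))
                   / (n%:R - alpha i)) ->
  xbar x = 1 - (n%:R * m / (n%:R - 1)) * ((alpha_hat alpha)^-1 - 1).
Proof.
move=> efforts; set X := xbar x in efforts *.
have n_neq0 : n%:R != 0 :> R by rewrite gt_eqF ?n_pos.
have n1_neq0 : n%:R - 1 != 0 :> R by rewrite subr_eq0 pnatr_eq1 neq_ltn n_gt1 orbT.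
have inv_sum_neq0 : inv_sum != 0 by rewrite gt_eqF ?inv_sum_gt0.
have inv_sum1_neq0 : inv_sum - 1 != 0 by rewrite subr_eq0 gt_eqF ?inv_sum_gt1.
(* Only the coefficient of (n - alpha i)^-1 depends on i, so summing yields inv_sum. *)
have effort_split i : x i = (n%:R - 1) * n%:R * (1 + (m - X)) * (n%:R - alpha i)^-1
                            - (n%:R - 1 + n%:R * (m - X)).
  by rewrite {1}efforts; field; rewrite gt_eqF ?n_sub_alpha_gt0.
have sum_x : X * n%:R = (n%:R - 1) * n%:R * (1 + (m - X)) * inv_sum
                        - n%:R * (n%:R - 1 + n%:R * (m - X)).
  have -> : X * n%:R = \sum_(i < n) x i by rewrite /X /xbar divfK.
  rewrite (eq_bigr _ (fun i _ => effort_split i)) sumrB -mulr_sumr.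
  by rewrite sumr_const card_ord -[(_ + _) *+ n]mulr_natl.
have solve_X : X * ((n%:R - 1) * (inv_sum - 1))
               = (n%:R - 1) * (1 + m) * inv_sum - (n%:R - 1) - n%:R * m.
  by apply: (mulfI n_neq0); lra.
rewrite -(mulfK (mulf_neq0 n1_neq0 inv_sum1_neq0) X) solve_X /alpha_hat.
by field; rewrite inv_sum_neq0 inv_sum1_neq0 n_neq0 n1_neq0.
Qed.

End AlphaHat.

Theorem mainTheorem8 (R : realType) (n : nat) (alpha : 'I_n -> R) (m : R)
  (x : 'I_n -> R) :
  (2 <= n)%N ->
  (forall i, 0 < alpha i < 1) ->
  0 < m < 1 ->
  pure_nash alpha m x ->
  xbar x < m ->
  (forall i, 0 < x i) ->
  [/\ (exists i, alpha i <= alpha_hat alpha),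
      (exists i, alpha_hat alpha <= alpha i),
      xbar x = 1 - (n%:R * m / (n%:R - 1)) * ((alpha_hat alpha)^-1 - 1)
    & forall i, x i = ((n%:R - 1) * alpha i - n%:R * (1 - alpha i) * (m - xbar x))
                      / (n%:R - alpha i)].
Proof.
move=> n_gt1 alpha01 _ nash curve x_gt0.
have efforts i := nash_effort (ltnW n_gt1) alpha01 nash curve (x_gt0 i).
split.
- exact: alpha_hat_ge_min.
- exact: alpha_hat_le_max.
- exact: xbar_of_efforts efforts.
- exact: efforts.
Qed.
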